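(* Let $C$ and $C'$ be configurations of 2REG, let $v\in C$, and let $t\ge 0$ be an integer with $\mathrm{d}_C((0,0),v)\le t$. Then $C\equiv'_{t,v}C'$ if and only if both of the following hold: (1) $C'$ is a consistent extension of the subset $M(v,t,C)$ of $C$; and (2) $M(v,t,C')\setminus M(v,t,C)=\emptyset$.
   Context: Positions are elements of $\mathbb{Z}^2$. Put $\epsilon_0=(1,0)$, $\epsilon_1=(0,1)$, $\epsilon_2=(-1,0)$, $\epsilon_3=(0,-1)$. Two positions $p,p'$ are adjacent if $p'-p\in\{\epsilon_0,\epsilon_1,\epsilon_2,\epsilon_3\}$. A path is a nonempty sequence of positions in which consecutive positions are adjacent; a set of positions $C$ is connected if any two of its elements are joined by a path inside $C$. A configuration of 2REG is a finite connected set $C\subseteq\mathbb{Z}^2$ containing the origin $(0,0)$ (the position of the general). For $p,p'\in C$, $\mathrm{d}_C(p,p')$ is the number of steps of a shortest path from $p$ to $p'$ inside $C$. For $p\in C$, the boundary condition $\mathrm{bc}_C(p)=(b_0,b_1,b_2,b_3)\in\{0,1\}^4$ has $b_i=1$ iff $p+\epsilon_i\in C$. Available information: for a configuration $C$, $v\in C$ and time $t\ge0$, $\mathrm{ai}(v,t,C)$ is the symbol $\mathrm{Q}$ if $\mathrm{d}_C((0,0),v)>t$, and otherwise the triple $(t,v,X)$ where $X=\{(v',\mathrm{bc}_C(v')) : v'\in C,\ \mathrm{d}_C((0,0),v')+\mathrm{d}_C(v',v)\le t\}$. For configurations $C,C'$, $C\equiv'_{t,v}C'$ means $v\in C\cap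 C'$ and $\mathrm{ai}(v,t,C)=\mathrm{ai}(v,t,C')\ne\mathrm{Q}$. Define $M(v,t,C)=\{v'\in C : \mathrm{d}_C((0,0),v')+\mathrm{d}_C(v',v)\le t\}$. For a configuration $C$, a subset $M\subseteq C$ and a configuration $C'$, $C'$ is a consistent extension of $M$ (as a subset of $C$) if $M\subseteq C'$ and $\mathrm{bc}_C(w)=\mathrm{bc}_{C'}(w)$ for every $w\in M$. *)

From HB Require Import structures.
From mathcomp Require Import all_boot all_order all_algebra.
From mathcomp Require Import finmap.
From Stdlib Require Import ClassicalEpsilon.
Set Implicit Arguments. Unset Strict Implicit. Unset Printing Implicit Defensive.
Import GRing.Theory Num.Theory.
Local Open Scope fset_scope.

Definition pos := (int * int)%type.
Definition origin : pos := (0%R, 0%R).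
Definition padd (p q : pos) : pos := (p.1 + q.1, p.2 + q.2)%R.
Definition eps0 : pos := (1%R, 0%R).
Definition eps1 : pos := (0%R, 1%R).
Definition eps2 : pos := ((-1)%R, 0%R).
Definition eps3 : pos := (0%R, (-1)%R).

Definition adjacent (p p' : pos) : bool :=
  [|| p' == padd p eps0, p' == padd p eps1, p' == padd p eps2 | p' == padd p eps3].

(* A path p = x_0, x_1, ..., x_n (n = size s steps) with x :: s, inside C. *)
Definition path_in (C : {fset pos}) (x : pos) (s : seq pos) : bool :=
  path adjacent x s && all (fun y => y \in C) (x :: s).

Definition connected (C : {fset pos}) : Prop :=
  forall p q, p \in C -> q \in C ->
    exists s, path_in C p s /\ last p s = q.

Definition config (C : {fset pos}) : Prop := origin \in C /\ connected C.

Definition is_dist (C : {fset pos}) (p q : pos) (n : nat) : Prop :=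
  (exists s, [/\ path_in C p s, last p s = q & size s = n]) /\
  (forall s, path_in C p s -> last p s = q -> (n <= size s)%N).

(* d_C(p,q); meaningful whenever a path from p to q in C exists. *)
Definition dist (C : {fset pos}) (p q : pos) : nat :=
  epsilon (inhabits 0%N) (is_dist C p q).

Definition bcT := (bool * bool * bool * bool)%type.

Definition bc (C : {fset pos}) (p : pos) : bcT :=
  (padd p eps0 \in C, padd p eps1 \in C, padd p eps2 \in C, padd p eps3 \in C).

Inductive info : Type :=
  | InfoQ : info
  | Info : nat -> pos -> {fset (pos * bcT)} -> info.

Definition ai (v : pos) (t : nat) (C : {fset pos}) : info :=
  if (t < dist C origin v)%N then InfoQ
  else Info t v [fset (v', bc C v') | v' in C & (dist C origin v' + dist C v' v <= t)%N].

Definition equiv' (t : nat) (v : pos) (C C' : {fset pos}) : Prop :=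
  [/\ v \in C, v \in C', ai v t C = ai v t C' & ai v t C <> InfoQ].

Definition M (v : pos) (t : nat) (C : {fset pos}) : {fset pos} :=
  [fset v' in C | (dist C origin v' + dist C v' v <= t)%N].

Definition consistent_extension (C : {fset pos}) (Ms : {fset pos}) (C' : {fset pos}) : Prop :=
  Ms `<=` C' /\ forall w, w \in Ms -> bc C w = bc C' w.

(* Both sides say that the pairs (w, bc w) for w in M(v,t,.) coincide for C
   and C'.  The only real point is that M(v,t,C) is contained in C' forces
   M(v,t,C) into M(v,t,C'): a shortest path from the origin to v through
   w in M(v,t,C) has length at most t, so every vertex on it lies in
   M(v,t,C), hence in C', and distances in C' can only be shorter. *)
From HB Require Import structures.
From mathcomp Require Import all_boot all_order all_algebra.
From mathcomp Require Import finmap.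
From Stdlib Require Import Classical ClassicalEpsilon.
Local Open Scope fset_scope.
Set Implicit Arguments. Unset Strict Implicit.

Section Paths.

Variable C : {fset pos}.

Lemma path_in_cons x y s :
  path_in C x (y :: s) = [&& adjacent x y, x \in C & path_in C y s].
Proof. by rewrite /path_in /= -!andbA; congr (_ && _); rewrite andbCA. Qed.

Lemma path_in_cat x s1 s2 :
  path_in C x (s1 ++ s2) = path_in C x s1 && path_in C (last x s1) s2.
Proof.
elim: s1 x => [|y s1 IH] x /=; last by rewrite !path_in_cons IH !andbA.
by rewrite /path_in /=; case: (x \in C); rewrite /= ?andbF.
Qed.

Lemma path_in_head x s : path_in C x s -> x \in C.
Proof. by case/andP=> _ /andP[]. Qed.

Lemma path_in_sub C' x s : {subset x :: s <= C'} -> path_in C x s -> path_in C' x s.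
Proof. by move=> sub; rewrite /path_in => /andP[-> _]; apply/allP. Qed.

Lemma path_in_split x s u : path_in C x s -> u \in x :: s ->
  exists s1 s2, [/\ path_in C x s1, last x s1 = u, path_in C u s2,
     last u s2 = last x s & size s1 + size s2 = size s]%N.
Proof.
elim: s x => [|y s IH] x Pxs.
  by rewrite inE => /eqP->; exists [::], [::].
rewrite inE; have [-> _|_ /= u_ys] := eqVneq u x.
  by exists [::], (y :: s); split=> //; rewrite /path_in /= (path_in_head Pxs).
move: Pxs; rewrite path_in_cons => /and3P[xy xC Pys].
have [s1 [s2 [P1 L1 P2 L2 S]]] := IH y Pys u_ys.
by exists (y :: s1), s2; rewrite path_in_cons xy xC P1 /= addSn S.
Qed.

Lemma is_dist_exists p q s : path_in C p s -> last p s = q ->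
  exists n, is_dist C p q n.
Proof.
move: {2}(size s) (erefl (size s)) => n; elim/ltn_ind: n s => n IH s Sn Ps Ls.
have [[s' [Ps' Ls' lt_s'n]]|shortest] :=
  classic (exists s', [/\ path_in C p s', last p s' = q & (size s' < n)%N]).
  exact: IH lt_s'n s' erefl Ps' Ls'.
exists n; split; first by exists s.
move=> s' Ps' Ls'; rewrite leqNgt; apply/negP => lt_s'n.
by apply: shortest; exists s'.
Qed.

Lemma dist_spec p q s : path_in C p s -> last p s = q -> is_dist C p q (dist C p q).
Proof. by move=> Ps Ls; apply: epsilon_spec; apply: is_dist_exists Ps Ls. Qed.

Lemma dist_le p q s : path_in C p s -> last p s = q -> (dist C p q <= size s)%N.
Proof. by move=> Ps Ls; apply: (dist_spec Ps Ls).2. Qed.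

Lemma shortest_path p q : connected C -> p \in C -> q \in C ->
  exists s, [/\ path_in C p s, last p s = q & size s = dist C p q].
Proof. by move=> conC pC qC; have [s [Ps Ls]] := conC p q pC qC; apply: (dist_spec Ps Ls).1. Qed.

Lemma dist_refl p : p \in C -> dist C p p = 0%N.
Proof. by move=> pC; apply/eqP; rewrite -leqn0 (@dist_le p p [::]) // /path_in /= pC. Qed.

End Paths.

Section Cone.

Variables (v : pos) (t : nat).

Lemma inM C w : (w \in M v t C) = (w \in C) && (dist C origin w + dist C w v <= t)%N.
Proof. by rewrite inE. Qed.

Lemma mem_M_self C : v \in C -> (dist C origin v <= t)%N -> v \in M v t C.
Proof. by move=> vC dvt; rewrite inM vC dist_refl // addn0. Qed.

Lemma path_in_sub_M C s : path_in C origin s -> last origin s = v ->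
  (size s <= t)%N -> {subset origin :: s <= M v t C}.
Proof.
move=> Ps Ls st u us; have [s1 [s2 [P1 L1 P2 L2 S]]] := path_in_split Ps us.
rewrite inM (path_in_head P2) /=; apply: leq_trans st.
by rewrite -S leq_add ?(dist_le P1 L1) ?(dist_le P2 (etrans L2 Ls)).
Qed.

Lemma M_sub_M C C' : connected C -> origin \in C -> v \in C ->
  M v t C `<=` C' -> M v t C `<=` M v t C'.
Proof.
move=> conC oC vC sub; apply/fsubsetP => w wM; move: (wM); rewrite inM => /andP[wC wt].
have [s1 [P1 L1 S1]] := shortest_path conC oC wC.
have [s2 [P2 L2 S2]] := shortest_path conC wC vC.
have P : path_in C origin (s1 ++ s2) by rewrite path_in_cat P1 L1.
have L : last origin (s1 ++ s2) = v by rewrite last_cat L1.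
have st : (size (s1 ++ s2) <= t)%N by rewrite size_cat S1 S2.
have : path_in C' origin (s1 ++ s2).
  by apply: path_in_sub (P) => u /(path_in_sub_M P L st)/(fsubsetP sub).
rewrite path_in_cat L1 => /andP[P1' P2'].
rewrite inM (path_in_head P2'); apply: leq_trans wt.
by rewrite -S1 -S2 leq_add ?(dist_le P1' L1) ?(dist_le P2' L2).
Qed.

Definition cone_agree C C' : Prop :=
  M v t C = M v t C' /\ {in M v t C, bc C =1 bc C'}.

Definition bc_graph C :=
  [fset (v', bc C v') | v' in C & (dist C origin v' + dist C v' v <= t)%N].

Lemma mem_bc_graph C a : (a \in bc_graph C) = (a.1 \in M v t C) && (a.2 == bc C a.1).
Proof.
apply/imfsetP/andP => [[x xM ->]|[aM /eqP a2]].
  by split; rewrite ?eqxx // inM; move: xM; rewrite inE.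
by exists a.1; [move: aM; rewrite inM inE | case: a aM a2 => /= ? ? _ ->].
Qed.

Lemma bc_graph_eq C C' : bc_graph C = bc_graph C' <-> cone_agree C C'.
Proof.
split=> [eqG|[eqM eqbc]].
  have memG D w : w \in M v t D -> (w, bc D w) \in bc_graph D.
    by rewrite mem_bc_graph /= eqxx andbT.
  have eqM : M v t C = M v t C'.
    apply/fsetP => w; apply/idP/idP => [/memG|/memG].
      by rewrite eqG mem_bc_graph => /andP[].
    by rewrite -eqG mem_bc_graph => /andP[].
  by split=> // w /memG; rewrite eqG mem_bc_graph => /andP[_ /eqP].
apply/fsetP => a; rewrite !mem_bc_graph -eqM.
by case aM: (a.1 \in M v t C); rewrite //= eqbc.
Qed.

Lemma aiE C : (dist C origin v <= t)%N -> ai v t C = Info t v (bc_graph C).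
Proof. by rewrite /ai ltnNge => ->. Qed.

Lemma equiv'_cone_agree C C' : v \in C -> (dist C origin v <= t)%N ->
  equiv' t v C C' <-> cone_agree C C'.
Proof.
move=> vC dvt; rewrite -bc_graph_eq; split=> [[_ vC' eq_ai _]|eqG].
  have dvt' : (dist C' origin v <= t)%N.
    by rewrite leqNgt; apply/negP => lt_tv; move: eq_ai; rewrite aiE // /ai lt_tv.
  by move: eq_ai; rewrite !aiE // => -[].
have : v \in M v t C' by move/bc_graph_eq: eqG => [<- _]; apply: mem_M_self.
rewrite inM => /andP[vC']; rewrite dist_refl // addn0 => dvt'.
by split; rewrite ?aiE ?eqG.
Qed.

Lemma consistent_extension_cone_agree C C' : connected C -> origin \in C -> v \in C ->
  consistent_extension C (M v t C) C' /\ M v t C' `\` M v t C = fset0 <->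
  cone_agree C C'.
Proof.
move=> conC oC vC; split=> [[[sub eqbc] /eqP]|[eqM eqbc]].
  rewrite fsetD_eq0 => subM'; split=> //; apply/eqP.
  by rewrite eqEfsubset subM' M_sub_M.
split; last by rewrite eqM fsetDv.
by split=> //; rewrite eqM; apply/fsubsetP => w; rewrite inM => /andP[].
Qed.

End Cone.

Unset Implicit Arguments.
Theorem theorem1 (C C' : {fset pos}) (v : pos) (t : nat) :
  config C -> config C' -> v \in C -> (dist C origin v <= t)%N ->
  (equiv' t v C C' <->
   (consistent_extension C (M v t C) C' /\ M v t C' `\` M v t C = fset0)).
Proof.
move=> [oC conC] _ vC dvt.
by rewrite equiv'_cone_agree // consistent_extension_cone_agree.
Qed.
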